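(* Let $B_1,B_2$ be two commuting nilpotent operators on a finite-dimensional complex vector space $V$. Then there exist a nilpotent operator $B_2'$ on $V$ and a vector $w\in V$ such that (i) $B_2'$ commutes with $B_1$; (ii) every linear combination $\alpha B_2+\beta B_2'$ ($\alpha,\beta\in\mathbb{C}$) is nilpotent; (iii) $w$ is a cyclic vector for the pair $(B_1,B_2')$, i.e. there is no proper subspace of $V$ invariant under $B_1$ and $B_2'$ and containing $w$. *)

From HB Require Import structures.
From mathcomp Require Import all_boot all_order all_algebra.
From mathcomp Require Import reals complex.
Set Implicit Arguments. Unset Strict Implicit. Unset Printing Implicit Defensive.
Import GRing.Theory Num.Theory.
Local Open Scope ring_scope.

(* Conventions: V = C^n realised as row vectors 'rV_n; an operator on V is a
   square matrix A acting by v |-> v *m A.  A subspace of V is represented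
   by (the row space of) a matrix, as in mxalgebra. *)

Definition nilpotent_mx (F : pzRingType) (n : nat) (A : 'M[F]_n) : Prop :=
  exists k : nat, A ^+ k = 0.

Definition cyclic_pair (F : fieldType) (n : nat) (A B : 'M[F]_n) (w : 'rV[F]_n) : Prop :=
  forall (W : 'M[F]_n),
    stablemx W A -> stablemx W B -> (w <= W)%MS -> (1%:M <= W)%MS.

(* Write x = B1 and z = B2.  One builds a Jordan basis g_a x^j (a < k, j < l_a,
   l nonincreasing) of the nilpotent x such that z maps each g_a into the span
   of basis vectors of larger key, the key of g_b x^j being lexicographic in
   (j - l_b, l_b, b).  It is constructed on every subspace U stable under x and z
   by induction on its dimension: the chains of U x are lifted through x, and
   chains of length one are added, spanning a complement of U x :&: ker x in
   U :&: ker x, chosen greedily along the nilpotent z so that z respects their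
   order.  Then B2' is the shift g_a x^j |-> g_(a+1) x^j: it commutes with x
   because the lengths never increase, it raises keys as z does, so every
   a z + b B2' raises keys and is nilpotent, and g_0 is cyclic since
   g_a = g_0 B2'^a. *)

From HB Require Import structures.
From mathcomp Require Import all_boot all_order all_algebra.
From mathcomp Require Import reals complex.
From mathcomp Require Import zify.
Set Implicit Arguments. Unset Strict Implicit. Unset Printing Implicit Defensive.
Import GRing.Theory Num.Theory.
Local Open Scope ring_scope.

Section Subspaces.
Variables (F : fieldType) (n : nat).

Lemma mulmxXSr m (v : 'M[F]_(m, n)) (M : 'M[F]_n) i : v *m M ^+ i *m M = v *m M ^+ i.+1.
Proof. by rewrite exprSr -mulmxE mulmxA. Qed.

Lemma mulmxXD m (v : 'M[F]_(m, n)) (M : 'M[F]_n) i j :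
  v *m M ^+ i *m M ^+ j = v *m M ^+ (i + j).
Proof. by rewrite exprD -mulmxE mulmxA. Qed.

Lemma stablemxX (T M : 'M[F]_n) i : stablemx T M -> stablemx T (M ^+ i).
Proof.
move=> sTM; elim: i => [|i IHi]; first by rewrite expr0 mulmx1.
by rewrite -mulmxXSr (submx_trans (submxMr M IHi)).
Qed.

Lemma sub_adds_cap_kermx m (v : 'M[F]_(m, n)) (S U M : 'M[F]_n) :
  (S <= U)%MS -> (v <= U)%MS -> (v *m M <= S *m M)%MS ->
  (v <= S + (U :&: kermx M))%MS.
Proof.
move=> sSU svU /submxP [D defvM].
rewrite capmxC (matrix_modl _ sSU) sub_capmx svU andbT.
have -> : v = D *m S + (v - D *m S) by rewrite addrC subrK.
rewrite addmx_sub_adds ?submxMl //.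
by apply/sub_kermxP; rewrite mulmxBl defvM mulmxA subrr.
Qed.

Lemma stable_capmx (A B M : 'M[F]_n) :
  stablemx A M -> stablemx B M -> stablemx (A :&: B)%MS M.
Proof.
move=> sAM sBM; rewrite sub_capmx.
by rewrite (submx_trans _ sAM) ?(submx_trans _ sBM) ?submxMr ?capmxSl ?capmxSr.
Qed.

Lemma mxrank_stable_nil_lt (U M : 'M[F]_n) :
  nilpotent_mx M -> stablemx U M -> U != 0 -> (\rank (U *m M) < \rank U)%N.
Proof.
move=> [N MN0] sUM; apply: contraR; rewrite -leqNgt => le_rk.
have sU_UM : (U <= U *m M)%MS by rewrite -(geq_leqif (mxrank_leqif_sup sUM)).
have sU_UMX j : (U <= U *m M ^+ j)%MS.
  elim: j => [|j IHj]; first by rewrite expr0 mulmx1.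
  by rewrite -mulmxXSr (submx_trans sU_UM) ?submxMr.
by rewrite -submx0 -(mulmx0 _ U) -MN0 sU_UMX.
Qed.

End Subspaces.

Section StairSpan.
Variables (F : fieldType) (n : nat).
Implicit Types (k : nat) (l : nat -> nat) (e : nat -> nat -> 'rV[F]_n).
Implicit Types (P Q : nat -> nat -> bool).

Definition stair_span k l e P : 'M[F]_n :=
  (\sum_(b < k) \sum_(j < l b | P b j) <<e b j>>)%MS.

Lemma stair_span_sup k l e P b j :
  (b < k)%N -> (j < l b)%N -> P b j -> (e b j <= stair_span k l e P)%MS.
Proof.
move=> lt_bk lt_jl Pbj; apply: (sumsmx_sup (Ordinal lt_bk)) => //.
by apply: (sumsmx_sup (Ordinal lt_jl)) => //; rewrite genmxE.
Qed.

Lemma stair_spanMr_sub k l e P (M : 'M[F]_n) m (B : 'M[F]_(m, n)) :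
  (forall b j, (b < k)%N -> (j < l b)%N -> P b j -> (e b j *m M <= B)%MS) ->
  (stair_span k l e P *m M <= B)%MS.
Proof.
move=> sub_eB; rewrite sumsmxMr; apply/sumsmx_subP => b _.
rewrite sumsmxMr; apply/sumsmx_subP => j Pbj.
by rewrite (eqmxMr _ (genmxE _)); apply: sub_eB.
Qed.

Lemma stair_span_sub k l e P m (B : 'M[F]_(m, n)) :
  (forall b j, (b < k)%N -> (j < l b)%N -> P b j -> (e b j <= B)%MS) ->
  (stair_span k l e P <= B)%MS.
Proof.
by move=> sub_eB; rewrite -[stair_span _ _ _ _]mulmx1; apply: stair_spanMr_sub => *;
  rewrite mulmx1; apply: sub_eB.
Qed.

Lemma stair_spanS k l e P Q :
  (forall b j, (b < k)%N -> (j < l b)%N -> P b j -> Q b j) ->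
  (stair_span k l e P <= stair_span k l e Q)%MS.
Proof.
by move=> PQ; apply: stair_span_sub => b j lt_bk lt_jl /(PQ b j lt_bk lt_jl);
  apply: stair_span_sup.
Qed.

Lemma stair_key_nilpotent k l e (key : nat -> nat -> nat) (M : 'M[F]_n) :
  (1%:M <= stair_span k l e (fun _ _ => true))%MS ->
  (forall b j, (b < k)%N -> (j < l b)%N ->
     (e b j *m M <= stair_span k l e (fun b' j' => key b j < key b' j')%N)%MS) ->
  nilpotent_mx M.
Proof.
move=> span_e key_incr.
have powM_sub m : (M ^+ m <= stair_span k l e (fun b j => m <= key b j)%N)%MS.
  elim: m => [|m IHm].
    by rewrite expr0 (submx_trans span_e) // stair_spanS.
  rewrite exprSr -mulmxE (submx_trans (submxMr M IHm)) //.
  apply: stair_spanMr_sub => b j lt_bk lt_jl le_m_key.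
  apply: submx_trans (key_incr b j lt_bk lt_jl) _.
  by apply: stair_spanS => b' j' _ _; apply: leq_trans.
pose K := (\sum_(b < k) \sum_(j < l b) key b j).+1.
exists K; apply/eqP; rewrite -submx0 (submx_trans (powM_sub K)) //.
apply: stair_span_sub => b j lt_bk lt_jl; rewrite leqNgt ltnS.
rewrite (bigD1 (Ordinal lt_bk)) //= (bigD1 (Ordinal lt_jl)) //=.
by rewrite -addnA leq_addr.
Qed.

End StairSpan.

Definition stair (k : nat) (l : nat -> nat) : seq (nat * nat) :=
  flatten [seq [seq (b, j) | j <- iota 0 (l b)] | b <- iota 0 k].

Lemma size_stair k l : size (stair k l) = (\sum_(b < k) l b)%N.
Proof.
elim: k => [|k IHk]; first by rewrite big_ord0.
rewrite /stair in IHk *.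
have -> : iota 0 k.+1 = iota 0 k ++ [:: k] by rewrite -addn1 iotaD.
rewrite map_cat flatten_cat size_cat IHk big_ord_recr /=.
by rewrite cats0 size_map size_iota.
Qed.

Lemma mem_stair k l b j : ((b, j) \in stair k l) = (b < k)%N && (j < l b)%N.
Proof.
apply/flatten_mapP/andP.
  by case=> b'; rewrite mem_iota => b'k /mapP [j']; rewrite mem_iota => j'l [-> ->].
case=> lt_bk lt_jl; exists b; first by rewrite mem_iota.
by apply/mapP; exists j; rewrite ?mem_iota.
Qed.

Section RowBasis.
Variables (F : fieldType) (n : nat) (I : eqType).
Variables (s : seq I) (e : I -> 'rV[F]_n).
Hypothesis e_span :
  forall W : 'M[F]_n, {in s, forall i, (e i <= W)%MS} -> (1%:M <= W)%MS.

Lemma spanning_mx_eq (A B : 'M[F]_n) :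
  {in s, forall i, e i *m A = e i *m B} -> A = B.
Proof.
move=> eqAB; apply/eqP; rewrite -subr_eq0 -(mul1mx (A - B)); apply/eqP.
apply/sub_kermxP; apply: e_span => i si.
by apply/sub_kermxP; rewrite mulmxBr eqAB ?subrr.
Qed.

Lemma spanning_mx_interp (f : I -> 'rV[F]_n) :
  size s = n -> exists y : 'M[F]_n, {in s, forall i, e i *m y = f i}.
Proof.
case: s e_span => [|i0 s'] span_s size_s.
  by exists 0 => i.
set t := i0 :: s' in span_s size_s *.
pose S := \matrix_(p < n) e (nth i0 t p).
pose T := \matrix_(p < n) f (nth i0 t p).
have row_index i : i \in t -> {p : 'I_n | nth i0 t p = i}.
  move=> ti; have lt_in : (index i t < n)%N by rewrite -size_s index_mem.
  by exists (Ordinal lt_in); apply: nth_index.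
have S_unit : S \in unitmx.
  rewrite -row_full_unit -sub1mx; apply: span_s => i /row_index [p <-].
  by rewrite -(rowK (fun p => e (nth i0 t p))) row_sub.
exists (invmx S *m T) => i /row_index [p <-].
rewrite -(rowK (fun p => e (nth i0 t p))) -(rowK (fun p => f (nth i0 t p))).
by rewrite -row_mul mulmxA mulmxV ?mul1mx.
Qed.

End RowBasis.

Section AdaptedComplement.
Variables (F : fieldType) (n : nat) (z : 'M[F]_n).
Hypothesis z_nil : nilpotent_mx z.

Lemma exists_sub_mapped_into (T W : 'M[F]_n) : stablemx T z -> ~~ (T <= W)%MS ->
  exists v : 'rV_n, [/\ (v <= T)%MS, ~~ (v <= W)%MS & (v *m z <= W)%MS].
Proof.
move=> sTz /row_subPn [i nsTiW].
have [N zN0] := z_nil.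
have exP : exists j, (row i T *m z ^+ j.+1 <= W)%MS.
  by exists N; rewrite exprSr zN0 mul0r mulmx0 sub0mx.
have [j Wj min_j] := ex_minnP exP.
exists (row i T *m z ^+ j); split.
- exact: submx_trans (submxMr _ (row_sub i T)) (stablemxX j sTz).
- case: j Wj min_j => [|j] Wj min_j; first by rewrite expr0 mulmx1.
  by apply/negP => /min_j; rewrite ltnn.
- by rewrite mulmxXSr.
Qed.

Lemma adapted_complement (T W : 'M[F]_n) :
  (W <= T)%MS -> stablemx T z -> stablemx W z ->
  exists r (v : nat -> 'rV[F]_n),
   [/\ forall a, (a < r)%N -> (v a <= T)%MS,
       forall a, (a < r)%N -> (v a *m z <= W + \sum_(b < r | (a < b)%N) <<v b>>)%MS,
       (T <= W + \sum_(b < r) <<v b>>)%MS &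
       \rank T = (\rank W + r)%N].
Proof.
move=> + sTz; have [d] := ubnP (\rank T - \rank W).
elim: d W => // d IHd W lt_rk sWT sWz.
have [sTW | nsTW] := boolP (T <= W)%MS.
  exists 0%N, (fun _ => 0); split => //; first by rewrite (submx_trans sTW) ?addsmxSl.
  by rewrite addn0; apply/eqP; rewrite eqn_leq !mxrankS.
have [v0 [sv0T nsv0W sv0zW]] := exists_sub_mapped_into sTz nsTW.
pose W1 := (W + v0)%MS.
have rkW1 : \rank W1 = (\rank W).+1.
  apply/eqP; rewrite eqn_leq (leq_trans (mxrank_adds_leqif W v0).1); last first.
    by rewrite -[X in (_ <= X)%N]addn1 leq_add2l rank_leq_row.
  rewrite (ltn_leqif (mxrank_leqif_sup (addsmxSl W v0))).
  by apply: contra nsv0W => /(submx_trans (addsmxSr W v0)).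
have sW1T : (W1 <= T)%MS by rewrite addsmx_sub sWT.
have sW1z : stablemx W1 z.
  by rewrite addsmxMr addsmx_sub (submx_trans sWz) ?(submx_trans sv0zW) ?addsmxSl.
have [|r [v [svT v_adapted sTv rkT]]] := IHd W1 _ sW1T sW1z.
  by have := mxrankS sW1T; rewrite rkW1; lia.
pose v' a := if (a < r)%N then v a else v0.
have sub_grow (P : pred nat) : P r ->
    (W1 + \sum_(b < r | P b) <<v b>> <= W + \sum_(b < r.+1 | P b) <<v' b>>)%MS.
  have v'_sub b : (b < r.+1)%N -> P b ->
      (v' b <= W + \sum_(b < r.+1 | P b) <<v' b>>)%MS.
    move=> lt_br Pb; apply: submx_trans (addsmxSr _ _).
    by apply: (sumsmx_sup (Ordinal lt_br)) => //; rewrite genmxE.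
  move=> Pr; rewrite !addsmx_sub addsmxSl /=.
  have := v'_sub r (ltnSn r) Pr; rewrite {1}/v' ltnn => -> /=.
  apply/sumsmx_subP => b Pb; rewrite genmxE.
  by have := v'_sub b (ltnW (ltn_ord b)) Pb; rewrite /v' ltn_ord.
exists r.+1, v'; split.
- by move=> a _; rewrite /v'; case: ifP => // /svT.
- move=> a; rewrite ltnS leq_eqVlt => /orP [/eqP ->|lt_ar].
    by rewrite /v' ltnn (submx_trans sv0zW) ?addsmxSl.
  by rewrite /v' lt_ar (submx_trans (v_adapted a lt_ar)) ?sub_grow.
- exact: submx_trans sTv (sub_grow predT isT).
- by rewrite rkT rkW1 addSnnS.
Qed.

End AdaptedComplement.

(* Encodes the lexicographic order on (i - l, l, a) in base n.+1, for l, a <= n. *)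
Definition chain_key (n l a i : nat) : nat :=
  ((i + n - l) * n.+1 * n.+1 + l * n.+1 + a)%N.

Lemma chain_key_lt_depth n la lb a b i j :
  (i + n - la < j + n - lb)%N -> (la <= n)%N -> (a <= n)%N ->
  (chain_key n la a i < chain_key n lb b j)%N.
Proof.
rewrite /chain_key => lt_depth le_la le_a.
set da := (i + n - la)%N in lt_depth *; set db := (j + n - lb)%N in lt_depth *.
nia.
Qed.

Lemma chain_key_lt_len n la lb a b i j :
  (i + n - la = j + n - lb)%N -> (la < lb)%N -> (a <= n)%N ->
  (chain_key n la a i < chain_key n lb b j)%N.
Proof. by rewrite /chain_key => ->; nia. Qed.

Lemma chain_key_lt_index n l a b i j :
  (i + n - l = j + n - l)%N -> (a < b)%N ->
  (chain_key n l a i < chain_key n l b j)%N.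
Proof. by rewrite /chain_key => ->; lia. Qed.

Lemma chain_keyD n l a i j : (l <= n)%N ->
  chain_key n l a (i + j) = (chain_key n l a i + j * n.+1 * n.+1)%N.
Proof.
rewrite /chain_key => le_l.
have -> : (i + j + n - l = (i + n - l) + j)%N by lia.
nia.
Qed.

Lemma chain_key_lift n la lb a b j : (la < n)%N -> (lb < n)%N ->
  (chain_key n la a 0 < chain_key n lb b j)%N ->
  (chain_key n la.+1 a 0 < chain_key n lb.+1 b j)%N.
Proof.
rewrite /chain_key => lt_la lt_lb.
have -> : (0 + n - la = (0 + n - la.+1).+1)%N by lia.
have -> : (j + n - lb = (j + n - lb.+1).+1)%N by lia.
nia.
Qed.

Section AdaptedJordanBasis.
Variables (F : fieldType) (n : nat) (x z : 'M[F]_n).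
Hypotheses (xz : x *m z = z *m x) (x_nil : nilpotent_mx x) (z_nil : nilpotent_mx z).

Definition chain_span k (g : nat -> 'rV[F]_n) l P :=
  stair_span k l (fun b j => g b *m x ^+ j) P.

Definition key_above (l : nat -> nat) a i b j :=
  (chain_key n (l a) a i < chain_key n (l b) b j)%N.

Record adapted_jordan_basis (U : 'M[F]_n) k (g : nat -> 'rV[F]_n) l : Prop := {
  ajb_sub : forall a, (a < k)%N -> (g a <= U)%MS;
  ajb_nil : forall a, (a < k)%N -> g a *m x ^+ l a = 0;
  ajb_len_gt0 : forall a, (a < k)%N -> (0 < l a)%N;
  ajb_len_nonincr : forall a, (a.+1 < k)%N -> (l a.+1 <= l a)%N;
  ajb_span : (U <= chain_span k g l (fun _ _ => true))%MS;
  ajb_rank : \rank U = (\sum_(a < k) l a)%N;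
  ajb_ker : (U :&: kermx x <= \sum_(a < k) <<g a *m x ^+ (l a).-1>>)%MS;
  ajb_ker_rank : \rank (U :&: kermx x) = k;
  ajb_adapted : forall a, (a < k)%N ->
    (g a *m z <= chain_span k g l (key_above l a 0))%MS }.

Lemma ajb0 : adapted_jordan_basis 0 0 (fun _ => 0) (fun _ => 0%N).
Proof.
split=> //; rewrite ?sub0mx ?mxrank0 ?big_ord0 //.
  by rewrite (submx_trans (capmxSl _ _)) ?sub0mx.
by apply/eqP; rewrite -leqn0 -(mxrank0 F n n) mxrankS ?capmxSl.
Qed.

Lemma chain_span_sub_stable (U : 'M[F]_n) k g l P :
  stablemx U x -> (forall a, (a < k)%N -> (g a <= U)%MS) ->
  (chain_span k g l P <= U)%MS.
Proof.
move=> sUx sgU; apply: stair_span_sub => b j lt_bk _ _.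
exact: submx_trans (submxMr _ (sgU b lt_bk)) (stablemxX j sUx).
Qed.

Section Extension.
Variable U : 'M[F]_n.
Hypotheses (sUx : stablemx U x) (sUz : stablemx U z).
Variables (k' : nat) (g' : nat -> 'rV[F]_n) (l' : nat -> nat).
Hypothesis J' : adapted_jordan_basis (U *m x) k' g' l'.
Variables (r : nat) (v : nat -> 'rV[F]_n).
Hypotheses (svU : forall c, (c < r)%N -> (v c <= U :&: kermx x)%MS)
  (v_adapted : forall c, (c < r)%N ->
     (v c *m z <= (U *m x :&: kermx x) + \sum_(b < r | (c < b)%N) <<v b>>)%MS)
  (v_span : (U :&: kermx x <= (U *m x :&: kermx x) + \sum_(b < r) <<v b>>)%MS)
  (rank_v : \rank (U :&: kermx x) = (\rank (U *m x :&: kermx x) + r)%N).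

Let k := (k' + r)%N.

Definition ext_gen a := if (a < k')%N then g' a *m pinvmx (U *m x) *m U else v (a - k').
Definition ext_len a := if (a < k')%N then (l' a).+1 else 1%N.

Variant ext_index_spec a : Prop :=
  | ExtOld of (a < k')%N
  | ExtNew c of (c < r)%N & a = (k' + c)%N.

Lemma ext_indexP a : (a < k)%N -> ext_index_spec a.
Proof.
move=> lt_ak; have [lt_ak'|le_k'a] := ltnP a k'; first exact: ExtOld.
by apply: (@ExtNew _ (a - k')); rewrite ?subnKC //; rewrite /k in lt_ak; lia.
Qed.

Lemma ext_len_old b : (b < k')%N -> ext_len b = (l' b).+1.
Proof. by rewrite /ext_len => ->. Qed.

Lemma ext_len_new c : ext_len (k' + c) = 1%N.
Proof. by rewrite /ext_len ltnNge leq_addr. Qed.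

Lemma ext_gen_new c : ext_gen (k' + c) = v c.
Proof. by rewrite /ext_gen ltnNge leq_addr /= addKn. Qed.

Lemma ext_len_gt0 a : (0 < ext_len a)%N.
Proof. by rewrite /ext_len; case: ifP. Qed.

Lemma ext_gen_old b : (b < k')%N -> ext_gen b *m x = g' b.
Proof.
by move=> lt_bk'; rewrite /ext_gen lt_bk' -mulmxA mulmxKpV ?(ajb_sub J').
Qed.

Lemma ext_gen_oldX b j : (b < k')%N -> ext_gen b *m x ^+ j.+1 = g' b *m x ^+ j.
Proof. by move=> lt_bk'; rewrite exprS -mulmxE mulmxA ext_gen_old. Qed.

Lemma ext_bottom_old b : (b < k')%N ->
  ext_gen b *m x ^+ (ext_len b).-1 = g' b *m x ^+ (l' b).-1.
Proof.
by move=> lt_bk'; rewrite ext_len_old //= -ext_gen_oldX // prednK ?(ajb_len_gt0 J').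
Qed.

Lemma ext_gen_sub a : (a < k)%N -> (ext_gen a <= U)%MS.
Proof.
case/ext_indexP => [lt_ak'|c lt_cr ->]; first by rewrite /ext_gen lt_ak' submxMl.
by rewrite ext_gen_new (submx_trans (svU lt_cr)) ?capmxSl.
Qed.

Lemma ext_gen_nil a : (a < k)%N -> ext_gen a *m x ^+ ext_len a = 0.
Proof.
case/ext_indexP => [lt_ak'|c lt_cr ->].
  by rewrite ext_len_old // ext_gen_oldX // (ajb_nil J').
rewrite ext_len_new ext_gen_new expr1; apply/sub_kermxP.
by rewrite (submx_trans (svU lt_cr)) ?capmxSr.
Qed.

Lemma ext_len_nonincr a : (a.+1 < k)%N -> (ext_len a.+1 <= ext_len a)%N.
Proof.
move=> lt_ak; rewrite /ext_len; case: ifP => [lt_ak'|_]; last by case: ifP.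
by rewrite (ltn_trans (ltnSn a) lt_ak') ltnS (ajb_len_nonincr J').
Qed.

Lemma ext_chain_lift (P' P : nat -> nat -> bool) :
  (forall b j, (b < k')%N -> (j < l' b)%N -> P' b j -> P b j) ->
  (chain_span k' g' l' P' <= chain_span k ext_gen ext_len P *m x)%MS.
Proof.
move=> P'P; apply: stair_span_sub => b j lt_bk' lt_jl P'bj.
rewrite -ext_gen_oldX // -mulmxXSr submxMr //.
apply: stair_span_sup; last exact: P'P.
  by rewrite /k ltn_addr.
by rewrite ext_len_old // ltnS ltnW.
Qed.

Lemma ext_bottoms_sub (P : nat -> nat -> bool) :
  (forall b, (b < k)%N -> P b (ext_len b).-1) ->
  (\sum_(a < k) <<ext_gen a *m x ^+ (ext_len a).-1>> <= chain_span k ext_gen ext_len P)%MS.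
Proof.
move=> Pbottom; apply/sumsmx_subP => a _; rewrite genmxE.
by apply: stair_span_sup; rewrite ?ltn_predL ?ext_len_gt0 ?Pbottom.
Qed.

Lemma ext_ker :
  (U :&: kermx x <= \sum_(a < k) <<ext_gen a *m x ^+ (ext_len a).-1>>)%MS.
Proof.
apply: submx_trans v_span _; rewrite addsmx_sub; apply/andP; split.
  apply: submx_trans (ajb_ker J') _; apply/sumsmx_subP => b _; rewrite genmxE.
  have lt_bk : (b < k)%N by rewrite /k ltn_addr.
  by apply: (sumsmx_sup (Ordinal lt_bk)) => //=; rewrite genmxE ext_bottom_old.
apply/sumsmx_subP => c _; rewrite genmxE.
have lt_k'c_k : (k' + c < k)%N by rewrite /k ltn_add2l.
apply: (sumsmx_sup (Ordinal lt_k'c_k)) => //=.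
by rewrite genmxE ext_len_new ext_gen_new expr0 mulmx1.
Qed.

Lemma ext_pullback (P : nat -> nat -> bool) m (w : 'M[F]_(m, n)) :
  (forall b, (b < k)%N -> P b (ext_len b).-1) -> (w <= U)%MS ->
  (w *m x <= chain_span k ext_gen ext_len P *m x)%MS ->
  (w <= chain_span k ext_gen ext_len P)%MS.
Proof.
move=> Pbottom swU swx.
have sSU := chain_span_sub_stable ext_len P sUx ext_gen_sub.
apply: submx_trans (sub_adds_cap_kermx sSU swU swx) _.
by rewrite addsmx_sub submx_refl (submx_trans ext_ker) ?ext_bottoms_sub.
Qed.

Lemma ext_span : (U <= chain_span k ext_gen ext_len (fun _ _ => true))%MS.
Proof.
apply: ext_pullback => //.
exact: submx_trans (ajb_span J') (ext_chain_lift _).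
Qed.

Lemma ext_ker_rank : \rank (U :&: kermx x) = k.
Proof. by rewrite rank_v (ajb_ker_rank J'). Qed.

Lemma ext_rank : \rank U = (\sum_(a < k) ext_len a)%N.
Proof.
rewrite -(mxrank_mul_ker U x) ext_ker_rank (ajb_rank J') /k big_split_ord /=.
have -> : (\sum_(b < k') ext_len b = \sum_(b < k') (l' b + 1))%N.
  by apply: eq_bigr => b _; rewrite addn1 ext_len_old.
have -> : (\sum_(c < r) ext_len (k' + c) = \sum_(c < r) 1)%N.
  by apply: eq_bigr => c _; rewrite ext_len_new.
by rewrite big_split /= !sum1_card !card_ord addnA.
Qed.

Lemma ext_len_le a : (a < k)%N -> (ext_len a <= n)%N.
Proof.
move=> lt_ak; apply: leq_trans (rank_leq_col U); rewrite ext_rank.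
by rewrite (bigD1 (Ordinal lt_ak)) //= leq_addr.
Qed.

Lemma ext_count_le : (k <= n)%N.
Proof. by rewrite -ext_ker_rank rank_leq_col. Qed.

Lemma ext_adapted_old a : (a < k')%N ->
  (ext_gen a *m z <= chain_span k ext_gen ext_len (key_above ext_len a 0))%MS.
Proof.
move=> lt_ak'; have lt_ak : (a < k)%N by rewrite /k ltn_addr.
have le_an : (a <= n)%N by rewrite ltnW // (leq_trans lt_ak) ?ext_count_le.
have len_a := ext_len_le lt_ak; rewrite ext_len_old // in len_a.
apply: ext_pullback => [b lt_bk||].
- have := ext_len_gt0 b; have := ext_len_le lt_bk; have := ajb_len_gt0 J' lt_ak'.
  by rewrite /key_above (ext_len_old lt_ak') => *; apply: chain_key_lt_depth => //; lia.
- exact: submx_trans (submxMr _ (ext_gen_sub lt_ak)) sUz.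
rewrite -mulmxA -xz mulmxA ext_gen_old //.
apply: submx_trans (ajb_adapted J' lt_ak') (ext_chain_lift _) => b j lt_bk' _.
have := ext_len_le (ltn_addr r lt_bk').
by rewrite /key_above !ext_len_old // => len_b; apply: chain_key_lift; lia.
Qed.

Lemma ext_adapted_new c : (c < r)%N ->
  (v c *m z <= chain_span k ext_gen ext_len (key_above ext_len (k' + c) 0))%MS.
Proof.
move=> lt_cr; have lt_ak : (k' + c < k)%N by rewrite /k ltn_add2l.
have le_an : (k' + c <= n)%N by rewrite ltnW // (leq_trans lt_ak) ?ext_count_le.
apply: submx_trans (v_adapted lt_cr) _; rewrite addsmx_sub; apply/andP; split.
  apply: submx_trans (ajb_ker J') _; apply/sumsmx_subP => b _; rewrite genmxE.
  have lt_bk : (b < k)%N by rewrite /k ltn_addr.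
  rewrite -ext_bottom_old //; apply: stair_span_sup; rewrite ?ltn_predL ?ext_len_gt0 //.
  have := ajb_len_gt0 J' (ltn_ord b).
  rewrite /key_above ext_len_new ext_len_old // => pos_b.
  by apply: chain_key_lt_len => //; lia.
apply/sumsmx_subP => b lt_cb; rewrite genmxE.
have lt_bk : (k' + b < k)%N by rewrite /k ltn_add2l.
have -> : v b = ext_gen (k' + b) *m x ^+ 0 by rewrite expr0 mulmx1 ext_gen_new.
apply: stair_span_sup; rewrite ?ext_len_new //.
by rewrite /key_above !ext_len_new; apply: chain_key_lt_index; rewrite ?ltn_add2l.
Qed.

Lemma ext_adapted a : (a < k)%N ->
  (ext_gen a *m z <= chain_span k ext_gen ext_len (key_above ext_len a 0))%MS.
Proof.
case/ext_indexP => [lt_ak'|c lt_cr ->]; first exact: ext_adapted_old.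
by rewrite ext_gen_new; apply: ext_adapted_new.
Qed.

Lemma ext_basis : adapted_jordan_basis U k ext_gen ext_len.
Proof.
split; [exact: ext_gen_sub | exact: ext_gen_nil | by move=> *; apply: ext_len_gt0
  | exact: ext_len_nonincr | exact: ext_span | exact: ext_rank | exact: ext_ker
  | exact: ext_ker_rank | exact: ext_adapted].
Qed.

End Extension.

Lemma adapted_jordan_basis_exists (U : 'M[F]_n) : stablemx U x -> stablemx U z ->
  exists k g l, adapted_jordan_basis U k g l.
Proof.
have [m] := ubnP (\rank U); elim: m U => // m IHm U lt_rk sUx sUz.
have [->|U_neq0] := eqVneq U 0.
  by exists 0%N, (fun _ => 0), (fun _ => 0%N); apply: ajb0.
have lt_rkx := mxrank_stable_nil_lt x_nil sUx U_neq0.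
have sUxx : stablemx (U *m x) x by rewrite submxMr.
have sUxz : stablemx (U *m x) z by rewrite -mulmxA xz mulmxA submxMr.
have [|k' [g' [l' J']]] := IHm (U *m x) _ sUxx sUxz; first exact: leq_trans lt_rkx _.
have sKz : stablemx (kermx x) z by apply: comm_mx_stable_ker.
have [r [v [svU v_adapted v_span rank_v]]] := adapted_complement z_nil
  (capmxS sUx (submx_refl (kermx x))) (stable_capmx sUz sKz) (stable_capmx sUxz sKz).
exists (k' + r)%N, (ext_gen U k' g' v), (ext_len k' l').
exact: (ext_basis sUx sUz J' svU v_adapted v_span rank_v).
Qed.

Section ShiftOperator.
Variables (k : nat) (g : nat -> 'rV[F]_n) (l : nat -> nat).
Hypothesis J : adapted_jordan_basis 1%:M k g l.

Definition shift_gen a := if (a.+1 < k)%N then g a.+1 else 0.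

Lemma ajb_full_span (W : 'M[F]_n) :
  {in stair k l, forall p, (g p.1 *m x ^+ p.2 <= W)%MS} -> (1%:M <= W)%MS.
Proof.
move=> sgW; apply: submx_trans (ajb_span J) _.
by apply: stair_span_sub => b j lt_bk lt_jl _; apply: (sgW (b, j)); rewrite mem_stair lt_bk.
Qed.

Lemma ajb_chain_eq0 b j : (b < k)%N -> (l b <= j)%N -> g b *m x ^+ j = 0.
Proof.
by move=> lt_bk le_lj; rewrite -(subnKC le_lj) -mulmxXD (ajb_nil J) ?mul0mx.
Qed.

Lemma shift_gen_eq0 a i : (a < k)%N -> (l a <= i)%N -> shift_gen a *m x ^+ i = 0.
Proof.
move=> lt_ak le_li; rewrite /shift_gen; case: ifP => [lt_a1k|_]; last exact: mul0mx.
by rewrite ajb_chain_eq0 // (leq_trans (ajb_len_nonincr J lt_a1k)).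
Qed.

Lemma shift_exists : exists y : 'M[F]_n,
  forall a i, (a < k)%N -> (i < l a)%N -> g a *m x ^+ i *m y = shift_gen a *m x ^+ i.
Proof.
have size_stair_n : size (stair k l) = n by rewrite size_stair -(ajb_rank J) mxrank1.
have [y y_shift] := spanning_mx_interp ajb_full_span
  (fun p => shift_gen p.1 *m x ^+ p.2) size_stair_n.
by exists y => a i lt_ak lt_il; apply: (y_shift (a, i)); rewrite mem_stair lt_ak.
Qed.

Variable y : 'M[F]_n.
Hypothesis y_shift : forall a i, (a < k)%N -> (i < l a)%N ->
  g a *m x ^+ i *m y = shift_gen a *m x ^+ i.

Lemma shift_commute : x *m y = y *m x.
Proof.
apply: (spanning_mx_eq ajb_full_span) => -[a i].
rewrite mem_stair => /andP [lt_ak lt_il] /=.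
rewrite !mulmxA y_shift // !mulmxXSr.
have [lt_i1l|le_li1] := ltnP i.+1 (l a); first by rewrite y_shift.
by rewrite ajb_chain_eq0 // shift_gen_eq0 // mul0mx.
Qed.

Lemma ajb_len_le_dim b : (b < k)%N -> (l b <= n)%N.
Proof.
move=> lt_bk; rewrite -[n](mxrank1 F) (ajb_rank J).
by rewrite (bigD1 (Ordinal lt_bk)) //= leq_addr.
Qed.

Lemma ajb_count_le_dim : (k <= n)%N.
Proof. by rewrite -[n](mxrank1 F) -(ajb_ker_rank J) mxrankS ?capmxSl. Qed.

Lemma ajb_mulz_above b j : (b < k)%N ->
  (g b *m x ^+ j *m z <= chain_span k g l (key_above l b j))%MS.
Proof.
move=> lt_bk; have xXz : x ^+ j *m z = z *m x ^+ j.
  by have := commrX j (esym xz : GRing.comm z x).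
rewrite -mulmxA xXz mulmxA (submx_trans (submxMr _ (ajb_adapted J lt_bk))) //.
apply: stair_spanMr_sub => b' j' lt_b'k lt_j'l key_lt; rewrite mulmxXD.
have [lt_jl'|le_l'j] := ltnP (j' + j) (l b'); last by rewrite ajb_chain_eq0 ?sub0mx.
apply: stair_span_sup => //; move: key_lt; rewrite /key_above.
by rewrite -(ltn_add2r (j * n.+1 * n.+1)) -!chain_keyD ?ajb_len_le_dim // add0n.
Qed.

Lemma shift_mul_above b j : (b < k)%N -> (j < l b)%N ->
  (g b *m x ^+ j *m y <= chain_span k g l (key_above l b j))%MS.
Proof.
move=> lt_bk lt_jl; rewrite y_shift // /shift_gen.
case: ifP => [lt_b1k|_]; last by rewrite mul0mx sub0mx.
have [lt_jl1|le_l1j] := ltnP j (l b.+1); last by rewrite ajb_chain_eq0 ?sub0mx.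
apply: stair_span_sup => //; rewrite /key_above.
have [lt_l1l|le_ll1] := ltnP (l b.+1) (l b).
  apply: chain_key_lt_depth; rewrite ?ajb_len_le_dim //.
    by have := ajb_len_le_dim lt_bk; lia.
  by rewrite ltnW // (leq_trans lt_bk) ?ajb_count_le_dim.
have -> : l b.+1 = l b by apply/eqP; rewrite eqn_leq le_ll1 (ajb_len_nonincr J).
exact: chain_key_lt_index.
Qed.

Lemma shift_comb_nilpotent (alpha beta : F) : nilpotent_mx (alpha *: z + beta *: y).
Proof.
apply: (stair_key_nilpotent (key := fun b j => chain_key n (l b) b j) (ajb_span J)).
move=> b j lt_bk lt_jl; rewrite mulmxDr -!scalemxAr addmx_sub ?scalemx_sub //.
  exact: ajb_mulz_above.
exact: shift_mul_above.
Qed.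

Lemma shift_cyclic : cyclic_pair x y (g 0).
Proof.
move=> W sWx sWy sg0W.
have sgW a : (a < k)%N -> (g a <= W)%MS.
  elim: a => // a IHa lt_a1k; have lt_ak := ltnW lt_a1k.
  have := y_shift lt_ak (ajb_len_gt0 J lt_ak).
  rewrite expr0 !mulmx1 /shift_gen lt_a1k => <-.
  exact: submx_trans (submxMr y (IHa lt_ak)) sWy.
apply: ajb_full_span => -[b j]; rewrite mem_stair => /andP [lt_bk _] /=.
exact: submx_trans (submxMr _ (sgW b lt_bk)) (stablemxX j sWx).
Qed.

End ShiftOperator.

End AdaptedJordanBasis.

Theorem lemma2p3 (R : realType) (n : nat) (B1 B2 : 'M[R[i]]_n) :
  nilpotent_mx B1 -> nilpotent_mx B2 -> B1 *m B2 = B2 *m B1 ->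
  exists (B2' : 'M[R[i]]_n) (w : 'rV[R[i]]_n),
    [/\ nilpotent_mx B2',
        B1 *m B2' = B2' *m B1,
        (forall a b : R[i], nilpotent_mx (a *: B2 + b *: B2')) &
        cyclic_pair B1 B2' w].
Proof.
move=> B1_nil B2_nil B1B2.
have [k [g [l J]]] := adapted_jordan_basis_exists B1B2 B1_nil B2_nil (submx1 _) (submx1 _).
have [B2' B2'_shift] := shift_exists J.
have comb_nil := shift_comb_nilpotent B1B2 J B2'_shift.
exists B2', (g 0%N); split.
- by have := comb_nil 0 1; rewrite scale0r add0r scale1r.
- exact: (shift_commute J B2'_shift).
- exact: comb_nil.
- exact: (shift_cyclic J B2'_shift).
Qed.
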